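(* Let $\mathcal{G}=(\mathcal{V},\mathcal{E})$ be an undirected graph with nodes $1,\dots,n$ and edges indexed $1,\dots,E$, and let $\mathcal{S}_i$ be the set of edges incident to node $i$. For every $z\in\mathbb{R}^E$, $$\left(\|z\|_{\mathrm{SM}}^*\right)^2\ge\frac12\left(\|z\|_{\mathrm{SMNO}}^*\right)^2.$$
   Context: Convention: a maximum over an empty set is $0$. Define $\|x\|_{\mathrm{SM}}=\sqrt{\sum_{i=1}^n\max_{j\in\mathcal{S}_i}x_j^2}$ on $\mathbb{R}^E$ and its dual norm $\|z\|_{\mathrm{SM}}^*=\sup_x\{z^Tx:\|x\|_{\mathrm{SM}}\le1\}$. An assignment is a choice, for each edge $\ell\equiv(i,j)$, of exactly one of its two endpoints; it yields pairwise disjoint sets $\mathcal{S}_i'\subseteq\mathcal{S}_i$ (possibly empty) whose union is all edges, where $\mathcal{S}_i'$ is the set of edges assigned to $i$. For $x\in\mathbb{R}^E$ let $\varphi(x)=\max$ over all assignments of $\sum_{i=1}^n\max_{\ell\in\mathcal{S}_i'}x_\ell^2$ (the maximizing assignment $\{\mathcal{S}_i^*\}$ depends on $x$). Then $\|z\|_{\mathrm{SMNO}}^*=\sup_x\{z^Tx:\sqrt{\varphi(x)}\le1\}$, i.e. the supremum of $z^Tx$ over $x$ subject to $\sqrt{\sum_i\max_{\ell\in\mathcal{S}_i^*}x_\ell^2}\le1$ with $\{\mathcal{S}^*_i\}$ the assignment maximizing $\sum_i\max_{\ell\in\mathcal{S}_i'}x_\ell^2$. *)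

From HB Require Import structures.
From mathcomp Require Import all_boot all_order all_algebra.
From mathcomp Require Import all_classical all_reals.
Set Implicit Arguments. Unset Strict Implicit. Unset Printing Implicit Defensive.
Import Order.TTheory GRing.Theory Num.Theory.
Local Open Scope ring_scope.
Local Open Scope classical_set_scope.

Section Norms.
Variables (R : realType) (n E : nat) (ends : 'I_E -> 'I_n * 'I_n).

Definition incident (i : 'I_n) (l : 'I_E) : bool :=
  ((ends l).1 == i) || ((ends l).2 == i).

(* max over a (possibly empty) set of squares; empty max = 0 *)
Definition sqmax (P : pred 'I_E) (x : 'I_E -> R) : R :=
  \big[Num.max/0]_(l | P l) (x l ^+ 2).

Definition SMnorm (x : 'I_E -> R) : R :=
  Num.sqrt (\sum_(i < n) sqmax (incident i) x).

Definition assigned (a : {ffun 'I_E -> bool}) (l : 'I_E) : 'I_n :=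
  if a l then (ends l).1 else (ends l).2.

Definition assign_val (a : {ffun 'I_E -> bool}) (x : 'I_E -> R) : R :=
  \sum_(i < n) sqmax (fun l => assigned a l == i) x.

Definition phi (x : 'I_E -> R) : R :=
  \big[Num.max/0]_(a : {ffun 'I_E -> bool}) assign_val a x.

Definition dot (z x : 'I_E -> R) : R := \sum_l z l * x l.

Definition SMdual (z : 'I_E -> R) : R :=
  sup [set dot z x | x in [set x | SMnorm x <= 1]].

Definition SMNOdual (z : 'I_E -> R) : R :=
  sup [set dot z x | x in [set x | Num.sqrt (phi x) <= 1]].

End Norms.

From HB Require Import structures.
From mathcomp Require Import all_boot all_order all_algebra.
From mathcomp Require Import all_classical all_reals.
Import Order.TTheory GRing.Theory Num.Theory.
Local Open Scope ring_scope.

(* Assigning every edge to its first endpoint, and then every edge to its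
   second endpoint, gives two assignments that together cover each incidence
   set S_i.  Hence sum_i max_{S_i} x^2 <= 2 phi(x), so the phi-unit ball is
   contained in sqrt 2 times the SM-unit ball, and SMNOdual <= sqrt 2 * SMdual. *)

Lemma sqrtr_le1 (R : rcfType) (s : R) : (Num.sqrt s <= 1) = (s <= 1).
Proof. by rewrite -[X in _ <= X]sqrtr1 ler_sqrt ?ler01. Qed.

Section Norms.
Context {R : realType} {n E : nat} (ends : 'I_E -> 'I_n * 'I_n).
Implicit Types (P : pred 'I_E) (x z : 'I_E -> R).

Lemma sqmax_ge0 P x : 0 <= sqmax P x.
Proof.
rewrite /sqmax; elim/big_ind: _ => //= [a b a0 b0 | l _]; last exact: sqr_ge0.
by rewrite le_max a0.
Qed.

Lemma le_sqmax P x l : P l -> x l ^+ 2 <= sqmax P x.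
Proof. exact: le_bigmax_cond. Qed.

Lemma sqmax_le P x c : 0 <= c -> (forall l, P l -> x l ^+ 2 <= c) ->
  sqmax P x <= c.
Proof. exact: bigmax_le. Qed.

Lemma sqmax0 P : sqmax P (fun=> 0 : R) = 0.
Proof.
by apply/eqP; rewrite eq_le sqmax_ge0 andbT sqmax_le // => l _; rewrite expr0n.
Qed.

Lemma sqmaxU_le P1 P2 x :
  sqmax [predU P1 & P2] x <= sqmax P1 x + sqmax P2 x.
Proof.
apply: sqmax_le => [|l /orP[P1l | P2l]]; first by rewrite addr_ge0 ?sqmax_ge0.
- by rewrite -[_ ^+ 2]addr0 lerD ?le_sqmax ?sqmax_ge0.
- by rewrite -[_ ^+ 2]add0r lerD ?le_sqmax ?sqmax_ge0.
Qed.

Lemma sqmaxZ_le P x k : sqmax P (fun l => k * x l) <= k ^+ 2 * sqmax P x.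
Proof.
apply: sqmax_le => [|l Pl]; first by rewrite mulr_ge0 ?sqr_ge0 ?sqmax_ge0.
by rewrite exprMn ler_wpM2l ?sqr_ge0 ?le_sqmax.
Qed.

Lemma assign_val_le_phi a x : assign_val ends a x <= phi ends x.
Proof. exact: le_bigmax. Qed.

Lemma sum_sqmax_incident_le_phi x :
  \sum_(i < n) sqmax (incident ends i) x <= 2 * phi ends x.
Proof.
pose first_end : {ffun 'I_E -> bool} := [ffun=> true].
pose second_end : {ffun 'I_E -> bool} := [ffun=> false].
apply: (@le_trans _ _ (assign_val ends first_end x + assign_val ends second_end x)).
  rewrite -big_split /=; apply: ler_sum => i _.
  apply: le_trans (sqmaxU_le _ _ x); apply: sqmax_le => [|l Sil].
    exact: sqmax_ge0.
  by apply: le_sqmax; rewrite /in_mem /= /assigned /first_end /second_end !ffunE.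
by rewrite mulr2n mulrDl mul1r lerD ?assign_val_le_phi.
Qed.

Lemma phi0 : phi ends (fun=> 0 : R) = 0.
Proof.
rewrite /phi; elim/big_rec: _ => // a m _ ->.
by rewrite /assign_val big1 ?maxxx // => i _; exact: sqmax0.
Qed.

Lemma SMnorm_le1_norm x l : SMnorm ends x <= 1 -> `|x l| <= 1.
Proof.
move=> le1; apply: le_trans le1; rewrite -sqrtr_sqr /SMnorm ler_wsqrtr //.
have l_at_first_end : incident ends (ends l).1 l by rewrite /incident eqxx.
apply: le_trans (le_sqmax _ x _ l_at_first_end) _.
by rewrite (bigD1 (ends l).1) //= lerDl sumr_ge0 // => i _; exact: sqmax_ge0.
Qed.

Lemma SMnorm_le1_scale_phi x : phi ends x <= 1 ->
  SMnorm ends (fun l => (Num.sqrt 2)^-1 * x l) <= 1.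
Proof.
move=> phi_le1; rewrite /SMnorm sqrtr_le1.
apply: le_trans (ler_sum _ (fun i _ => sqmaxZ_le _ _ _)) _.
rewrite -mulr_sumr exprVn sqr_sqrtr ?ler0n // ler_pdivrMl ?ltr0n //.
by apply: le_trans (sum_sqmax_incident_le_phi x) _; rewrite ler_wpM2l ?ler0n.
Qed.

Local Notation SMvals z :=
  [set dot z x | x in [set x | SMnorm ends x <= 1]]%classic.
Local Notation SMNOvals z :=
  [set dot z x | x in [set x | Num.sqrt (phi ends x) <= 1]]%classic.

Lemma dot0r z : dot z (fun=> 0) = 0.
Proof. by rewrite /dot big1 // => l _; rewrite mulr0. Qed.

Lemma dotrZ z x k : dot z (fun l => k * x l) = k * dot z x.
Proof. by rewrite /dot mulr_sumr; apply: eq_bigr => l _; rewrite mulrCA. Qed.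

Lemma SMNOvals0 z : SMNOvals z 0.
Proof. by exists (fun=> 0); rewrite ?dot0r //= phi0 sqrtr0 ler01. Qed.

Lemma SMvals_has_ubound z : has_ubound (SMvals z).
Proof.
exists (\sum_l `|z l|) => _ [x /= x_le1 <-]; rewrite /dot.
apply: ler_sum => l _; apply: le_trans (ler_norm _) _.
by rewrite normrM ler_piMr ?SMnorm_le1_norm.
Qed.

Lemma SMNOvals_ubound z : ubound (SMNOvals z) (Num.sqrt 2 * SMdual ends z).
Proof.
move=> _ [x /= x_le1 <-]; rewrite sqrtr_le1 in x_le1.
have sqrt2_gt0 : 0 < Num.sqrt 2 :> R by rewrite sqrtr_gt0 ltr0n.
have -> : dot z x = Num.sqrt 2 * dot z (fun l => (Num.sqrt 2)^-1 * x l).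
  by rewrite dotrZ mulrA mulfV ?mul1r // gt_eqF.
rewrite ler_pM2l //; apply: (ub_le_sup (SMvals_has_ubound z)).
by exists (fun l => (Num.sqrt 2)^-1 * x l); rewrite //= SMnorm_le1_scale_phi.
Qed.

Lemma SMNOdual_le z : SMNOdual ends z <= Num.sqrt 2 * SMdual ends z.
Proof. exact: ge_sup (ex_intro _ 0 (SMNOvals0 z)) (SMNOvals_ubound z). Qed.

Lemma SMNOdual_ge0 z : 0 <= SMNOdual ends z.
Proof.
exact: ub_le_sup (ex_intro _ _ (SMNOvals_ubound z)) _ (SMNOvals0 z).
Qed.
End Norms.

Theorem lemma5 (R : realType) (n E : nat) (ends : 'I_E -> 'I_n * 'I_n)
  (no_loop : forall l, (ends l).1 != (ends l).2)
  (no_parallel : forall l l', [set (ends l).1; (ends l).2] = [set (ends l').1; (ends l').2] -> l = l')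
  (z : 'I_E -> R) :
  (SMdual ends z) ^+ 2 >= 2^-1 * (SMNOdual ends z) ^+ 2.
Proof.
have SMNO_ge0 := SMNOdual_ge0 ends z.
have SMNO_le := SMNOdual_le ends z.
have SMNO_sqr_le : SMNOdual ends z ^+ 2 <= 2 * SMdual ends z ^+ 2.
  have -> : 2 * SMdual ends z ^+ 2 = (Num.sqrt 2 * SMdual ends z) ^+ 2.
    by rewrite exprMn sqr_sqrtr ?ler0n.
  by rewrite ler_pXn2r ?nnegrE // (le_trans SMNO_ge0).
by rewrite ler_pdivrMl ?ltr0n.
Qed.
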